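(* Consider the reaction network (BI) on the ten species $\mathrm{NE}_1,\mathrm{NI}_1,\mathrm{N}_1,\mathrm{D}_1,\mathrm{T}_1,\mathrm{NE}_2,\mathrm{NI}_2,\mathrm{N}_2,\mathrm{D}_2,\mathrm{T}_2$ with the six irreversible reactions \[ \begin{aligned} &11:\ \mathrm{NI}_1+\mathrm{NE}_1\to \mathrm{N}_1, && 21:\ \mathrm{NI}_2+\mathrm{NE}_2\to \mathrm{N}_2,\\ &12:\ \mathrm{N}_1+\mathrm{D}_2\to \mathrm{NI}_1+\mathrm{T}_2, && 22:\ \mathrm{N}_2+\mathrm{D}_1\to \mathrm{NI}_2+\mathrm{T}_1,\\ &13:\ \mathrm{T}_1\to \mathrm{NE}_1+\mathrm{D}_1, && 23:\ \mathrm{T}_2\to \mathrm{NE}_2+\mathrm{D}_2, \end{aligned} \] and its associated ODE system (writing $[X]$ for the concentration of species $X$) \[ \begin{cases} [\dot{\mathrm{NE}}_1]=-r_{11}([\mathrm{NI}_1],[\mathrm{NE}_1])+r_{13}([\mathrm{T}_1]),\\ [\dot{\mathrm{NI}}_1]=r_{12}([\mathrm{N}_1],[\mathrm{D}_2])-r_{11}([\mathrm{NI}_1],[\mathrm{NE}_1]),\\ [\dot{\mathrm{N}}_1]=-r_{12}([\mathrm{N}_1],[\mathrm{D}_2])+r_{11}([\mathrm{NI}_1],[\mathrm{NE}_1]),\\ [\dot{\mathrm{D}}_1]=r_{13}([\mathrm{T}_1])-r_{22}([\mathrm{N}_2],[\mathrm{D}_1]),\\ [\dot{\mathrm{T}}_1]=-r_{13}([\mathrm{T}_1])+r_{22}([\mathrm{N}_2],[\mathrm{D}_1]),\\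 [\dot{\mathrm{NE}}_2]=-r_{21}([\mathrm{NI}_2],[\mathrm{NE}_2])+r_{23}([\mathrm{T}_2]),\\ [\dot{\mathrm{NI}}_2]=r_{22}([\mathrm{N}_2],[\mathrm{D}_1])-r_{21}([\mathrm{NI}_2],[\mathrm{NE}_2]),\\ [\dot{\mathrm{N}}_2]=-r_{22}([\mathrm{N}_2],[\mathrm{D}_1])+r_{21}([\mathrm{NI}_2],[\mathrm{NE}_2]),\\ [\dot{\mathrm{D}}_2]=-r_{12}([\mathrm{N}_1],[\mathrm{D}_2])+r_{23}([\mathrm{T}_2]),\\ [\dot{\mathrm{T}}_2]=r_{12}([\mathrm{N}_1],[\mathrm{D}_2])-r_{23}([\mathrm{T}_2]). \end{cases} \] Then, for every choice of monotone chemical reaction rate functions $r_{11},r_{12},r_{13},r_{21},r_{22},r_{23}$ (whether or not the kinetic symmetry $r_{1k}\equiv r_{2k}$, $k=1,2,3$, is imposed), the system admits only one single positive steady state in each stoichiometric compatibility class. Moreover, the network (BI) is non-autocatalytic; in particular it possesses no unstable-positive feedback, and (BI) has no capacity for differentiation.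
   Context: General setting. A reaction network has species $X_1,\dots,X_M$ and irreversible reactions $j:\ \sum_m s^j_m X_m\to\sum_m \tilde s^j_m X_m$ with nonnegative stoichiometric coefficients; $X_m$ is a reactant of $j$ if $s^j_m>0$. The stoichiometric matrix is $S_{mj}=\tilde s^j_m-s^j_m$, and the ODE system is $\dot x=S\mathbf r(x)$, $x\in\mathbb R^M_{>0}$. A stoichiometric compatibility class is a set $(x_0+\operatorname{Im}S)\cap\mathbb R^M_{>0}$. A rate function $r_j$ is monotone chemical if (i) $r_j(x)\ge0$ for $x\in\mathbb R^M_{\ge0}$; (ii) $r_j(x)>0$ iff $x_m>0$ for all $m$ with $s^j_m>0$; (iii) $\partial r_j/\partial x_m\equiv0$ if $s^j_m=0$; (iv) $\partial r_j/\partial x_m>0$ for $x>0$ and $s^j_m>0$. Child-Selections: a $k$-Child-Selection (CS) triple $(\kappa,E_\kappa,J)$ consists of a set $\kappa$ of $k$ species, a set $E_\kappa$ of $k$ reactions and a bijection $J:\kappa\to E_\kappa$ such that each $X_m\in\kappa$ is a reactant of $J(X_m)$. Its CS-matrix is the $k\times k$ matrix $S[\kappa]$ with entries $S[\kappa]_{ml}=S_{m,J(X_l)}$ for $X_m,X_l\in\kappa$. An unstable-positive feedback is a $k\times k$ CS-matrix with $\operatorname{sign}\det S[\kappa]=(-1)^{k-1}$ such that no principal $k'\times k'$ submatrix with $k'<k$ has determinant of sign $(-1)^{k'-1}$. A network is autocatalytic if it has an unstable-positive feedback which is a Metzler matrix (all off-diagonal entries $\ge0$), and non-autocatalytic otherwise.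 Capacity for differentiation: let $R$ be the symbolic reactivity matrix ($|\mathbf E|\times M$, $R_{jm}=r_{jm}$ a positive symbol if $s^j_m>0$, else $0$; the symbols stand for the partial derivatives $\partial r_j/\partial x_m$ at a positive steady state, which can be prescribed arbitrarily for parameter-rich kinetics), $G=SR$ the symbolic Jacobian, $n=\dim\ker S^T$, and $a_{M-n}$ the coefficient of the characteristic polynomial of $G$ given by the sum of principal minors of order $M-n$ (which, for a nondegenerate network, is the determinant of the Jacobian restricted to a stoichiometric compatibility class). The two-cell network has the capacity for (zero-eigenvalue bifurcation and) differentiation if there are positive values of the symbols, satisfying kinetic symmetry at a homogeneous steady state (symbols of reactions/species related by swapping the cell indices $1\leftrightarrow2$ are equal), for which $a_{M-n}=0$. *)

From HB Require Import structures.
From mathcomp Require Import all_boot all_order all_algebra.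
From mathcomp Require Import all_classical all_reals all_analysis.
Set Implicit Arguments. Unset Strict Implicit. Unset Printing Implicit Defensive.
Import Order.TTheory GRing.Theory Num.Theory.
Local Open Scope ring_scope.

(* A network with M species and E reactions is given by the reactant
   coefficients s (s m j = s^j_m) and product coefficients st (st m j = s~^j_m). *)

Definition reactant (M E : nat) (s : 'M[nat]_(M, E)) (m : 'I_M) (j : 'I_E) : bool :=
  (0 < s m j)%N.

Definition stoich (R : nzRingType) (M E : nat) (s st : 'M[nat]_(M, E)) : 'M[R]_(M, E) :=
  \matrix_(m, j) ((st m j)%:R - (s m j)%:R).

Definition is_CS (M E : nat) (s : 'M[nat]_(M, E)) (k : nat)
    (kappa : 'I_k -> 'I_M) (J : 'I_k -> 'I_E) : Prop :=
  [/\ (0 < k)%N, injective kappa, injective J &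
      forall i, reactant s (kappa i) (J i)].

Definition CS_matrix (R : nzRingType) (M E k : nat) (S : 'M[R]_(M, E))
    (kappa : 'I_k -> 'I_M) (J : 'I_k -> 'I_E) : 'M[R]_k :=
  \matrix_(i, l) S (kappa i) (J l).

Definition principal_sub (R : Type) (k k' : nat) (f : 'I_k' -> 'I_k) (A : 'M[R]_k)
  : 'M[R]_k' := \matrix_(i, j) A (f i) (f j).

Definition unstable_positive_feedback (R : realDomainType) (k : nat) (A : 'M[R]_k)
  : Prop :=
  Num.sg (\det A) = (-1) ^+ k.-1 /\
  forall (k' : nat) (f : 'I_k' -> 'I_k), injective f -> (0 < k' < k)%N ->
    Num.sg (\det (principal_sub f A)) <> (-1) ^+ k'.-1.

Definition Metzler (R : realDomainType) (k : nat) (A : 'M[R]_k) : Prop :=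
  forall i j, i != j -> 0 <= A i j.

Definition has_unstable_positive_feedback (R : realDomainType) (M E : nat)
    (s st : 'M[nat]_(M, E)) : Prop :=
  exists k (kappa : 'I_k -> 'I_M) (J : 'I_k -> 'I_E),
    is_CS s kappa J /\
    unstable_positive_feedback (CS_matrix (stoich R s st) kappa J).

Definition autocatalytic (R : realDomainType) (M E : nat)
    (s st : 'M[nat]_(M, E)) : Prop :=
  exists k (kappa : 'I_k -> 'I_M) (J : 'I_k -> 'I_E),
    is_CS s kappa J /\
    unstable_positive_feedback (CS_matrix (stoich R s st) kappa J) /\
    Metzler (CS_matrix (stoich R s st) kappa J).

(* symbolic reactivity matrix evaluated at the symbol values rho *)
Definition reactivity (R : nzRingType) (M E : nat) (s : 'M[nat]_(M, E))
    (rho : 'I_E -> 'I_M -> R) : 'M[R]_(E, M) :=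
  \matrix_(j, m) (if reactant s m j then rho j m else 0).

Definition principal_minor_sum (R : comNzRingType) (M : nat) (G : 'M[R]_M) (k : nat)
  : R :=
  \sum_(A : {set 'I_M} | #|A| == k)
     \det (\matrix_(i < #|A|, j < #|A|) G (enum_val i) (enum_val j)).

(* n = dim ker S^T, computed as the rank of the (row) left kernel of S *)
Definition dim_ker_ST (R : fieldType) (M E : nat) (S : 'M[R]_(M, E)) : nat :=
  \rank (kermx S).

Definition a_Mn (R : fieldType) (M E : nat) (s st : 'M[nat]_(M, E))
    (rho : 'I_E -> 'I_M -> R) : R :=
  let S := stoich R s st in
  principal_minor_sum (S *m reactivity s rho) (M - dim_ker_ST S).

(* capacity for differentiation of a two-cell network, the cell swap being
   given by swS on species and swE on reactions *)
Definition capacity_for_differentiation (R : realFieldType) (M E : nat)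
    (s st : 'M[nat]_(M, E)) (swS : 'I_M -> 'I_M) (swE : 'I_E -> 'I_E) : Prop :=
  exists rho : 'I_E -> 'I_M -> R,
    (forall j m, reactant s m j -> 0 < rho j m) /\
    (forall j m, reactant s m j -> rho (swE j) (swS m) = rho j m) /\
    a_Mn s st rho = 0.

Definition mono_chem1 (R : realType) (r : R -> R) : Prop :=
  [/\ forall a, 0 <= a -> 0 <= r a,
      forall a, 0 <= a -> (0 < r a <-> 0 < a) &
      forall a, 0 < a -> derivable r a 1 /\ 0 < 'D_1 r a].

Definition mono_chem2 (R : realType) (r : R -> R -> R) : Prop :=
  [/\ forall a b, 0 <= a -> 0 <= b -> 0 <= r a b,
      forall a b, 0 <= a -> 0 <= b -> (0 < r a b <-> 0 < a /\ 0 < b),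
      forall a b, 0 < a -> 0 < b ->
        derivable (fun u => r u b) a 1 /\ 0 < 'D_1 (fun u => r u b) a &
      forall a b, 0 < a -> 0 < b ->
        derivable (fun v => r a v) b 1 /\ 0 < 'D_1 (fun v => r a v) b].

(* species: 0 NE1, 1 NI1, 2 N1, 3 D1, 4 T1, 5 NE2, 6 NI2, 7 N2, 8 D2, 9 T2
   reactions: 0 = 11, 1 = 12, 2 = 13, 3 = 21, 4 = 22, 5 = 23 *)
Definition NE1 : 'I_10 := @Ordinal 10 0 isT.
Definition NI1 : 'I_10 := @Ordinal 10 1 isT.
Definition N1  : 'I_10 := @Ordinal 10 2 isT.
Definition D1  : 'I_10 := @Ordinal 10 3 isT.
Definition T1  : 'I_10 := @Ordinal 10 4 isT.
Definition NE2 : 'I_10 := @Ordinal 10 5 isT.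
Definition NI2 : 'I_10 := @Ordinal 10 6 isT.
Definition N2  : 'I_10 := @Ordinal 10 7 isT.
Definition D2  : 'I_10 := @Ordinal 10 8 isT.
Definition T2  : 'I_10 := @Ordinal 10 9 isT.

(* (species, reaction) pairs with coefficient 1 (all others are 0) *)
Definition BI_reactant_pairs : seq (nat * nat) :=
  [:: (1, 0); (0, 0);   (* 11: NI1 + NE1 -> N1 *)
      (2, 1); (8, 1);   (* 12: N1 + D2 -> NI1 + T2 *)
      (4, 2);           (* 13: T1 -> NE1 + D1 *)
      (6, 3); (5, 3);   (* 21: NI2 + NE2 -> N2 *)
      (7, 4); (3, 4);   (* 22: N2 + D1 -> NI2 + T1 *)
      (9, 5)]%N.        (* 23: T2 -> NE2 + D2 *)
Definition BI_product_pairs : seq (nat * nat) :=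
  [:: (2, 0);
      (1, 1); (9, 1);
      (0, 2); (3, 2);
      (7, 3);
      (6, 4); (4, 4);
      (5, 5); (8, 5)]%N.

Definition s_BI : 'M[nat]_(10, 6) :=
  \matrix_(m, j) (nat_of_bool (((m : nat), (j : nat)) \in BI_reactant_pairs)).
Definition st_BI : 'M[nat]_(10, 6) :=
  \matrix_(m, j) (nat_of_bool (((m : nat), (j : nat)) \in BI_product_pairs)).

Definition S_BI (R : nzRingType) : 'M[R]_(10, 6) := stoich R s_BI st_BI.

Definition BI_rates (R : realType) (r11 r12 : R -> R -> R) (r13 : R -> R)
    (r21 r22 : R -> R -> R) (r23 : R -> R) (x : 'cV[R]_10) : 'cV[R]_6 :=
  \col_(j < 6) nth 0
    [:: r11 (x NI1 0) (x NE1 0); r12 (x N1 0) (x D2 0); r13 (x T1 0);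
        r21 (x NI2 0) (x NE2 0); r22 (x N2 0) (x D1 0); r23 (x T2 0)] j.

Definition positive_vec (R : realDomainType) (M : nat) (x : 'cV[R]_M) : Prop :=
  forall i, 0 < x i 0.

Definition same_SCC (R : nzRingType) (M E : nat) (S : 'M[R]_(M, E)) (x y : 'cV[R]_M)
  : Prop := exists v : 'cV[R]_E, y - x = S *m v.

(* cell swap 1 <-> 2 *)
Definition swap_species_BI (i : 'I_10) : 'I_10 := inord ((i + 5) %% 10).
Definition swap_reactions_BI (j : 'I_6) : 'I_6 := inord ((j + 3) %% 6).

(* Every species of (BI) is consumed by exactly one reaction and produced by exactly one other
   one, both with coefficient one.  Hence, up to the sign (-1)^k, a k x k CS-matrix is the
   identity minus a 0/1 matrix with at most one 1 per row: its determinant is 0 or (-1)^k, never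
   of the sign (-1)^(k-1) required of an unstable-positive feedback.  For the same reason each
   principal minor of order k of the symbolic Jacobian has the sign (-1)^k or vanishes, and on
   the species NE1, N1, D1, NI2, T2 the CS-matrix is triangular up to reordering, so that
   a_{M-n} = a_5 < 0 for all positive symbols, kinetically symmetric or not.

   At a steady state all six rates are equal.  For two positive steady states of one
   compatibility class with common rates c <= c', monotonicity propagates through the
   conservation laws D_i + T_i and NI_i + N_i along T1 -> D1 -> N2 -> NE2 and
   T2 -> D2 -> N1 -> NE1, so each of NE1, N1, T1, NE2, N2, T2 is at most its counterpart; as
   their total is conserved, all concentrations agree. *)

From mathcomp Require Import all_boot all_order all_algebra.
From mathcomp Require Import all_classical all_reals all_analysis.
From mathcomp Require Import lra.
Set Implicit Arguments.
Unset Strict Implicit.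
Unset Printing Implicit Defensive.
Import Order.TTheory GRing.Theory Num.Theory.
Local Open Scope ring_scope.

Section UnitDiagonalDeterminants.
Variable R : fieldType.

Lemma det_unitdiag_sparse_rows k (A : 'M[R]_k) :
  (forall i, A i i = 1) ->
  (forall i j, i != j -> A i j = 0 \/ A i j = -1) ->
  (forall i j j', i != j -> i != j' -> A i j != 0 -> A i j' != 0 -> j = j') ->
  \det A = 0 \/ \det A = 1.
Proof.
elim: k A => [|k IH] A A_diag A_off A_sparse; first by right; rewrite det_mx00.
case: (boolP [exists i, [forall j, (j != i) ==> (A i j == 0)]]) =>
    [/existsP [i /forallP i_row] | no_diag_row].
  rewrite (expand_det_row _ i) (bigD1 i) //= big1 ?addr0; last first.
    by move=> j ji; rewrite (eqP (implyP (i_row j) ji)) mul0r.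
  rewrite A_diag mul1r /cofactor addnn -signr_odd odd_double mul1r.
  apply: IH => [a | a b | a b b'].
  - by rewrite !mxE A_diag.
  - by rewrite !mxE => ab; apply: A_off; rewrite (inj_eq lift_inj).
  rewrite !mxE => ab ab' Ab Ab'; apply: (@lift_inj _ i).
  by apply: (A_sparse (lift i a)); rewrite ?(inj_eq lift_inj).
(* every row has a single -1 off the diagonal, so the rows sum to zero *)
left; apply/eqP; rewrite -det_tr; apply/det0P; exists (const_mx 1).
  by apply/eqP => /rowP /(_ 0); rewrite !mxE; apply/eqP; exact: oner_neq0.
apply/rowP => i; rewrite !mxE.
move: no_diag_row; rewrite negb_exists => /forallP /(_ i).
rewrite negb_forall => /existsP [j]; rewrite negb_imply eq_sym => /andP [ij Aij].
rewrite (bigD1 i) //= (bigD1 j) 1?eq_sym //= big1 => [|l /andP [li lj]].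
  rewrite !mxE A_diag; have [Aij0 | ->] := A_off i j ij.
    by rewrite Aij0 eqxx in Aij.
  by rewrite !mul1r addr0 subrr.
have il : i != l by rewrite eq_sym.
rewrite !mxE; have [-> | Ail] := A_off i l il; first by rewrite mulr0.
have l_eq_j : l = j by apply: (A_sparse i) => //; rewrite Ail oppr_eq0 oner_neq0.
by rewrite l_eq_j eqxx in lj.
Qed.

Lemma det_unitdiag_trig_by k (A : 'M[R]_k) (h : 'I_k -> nat) :
  (forall i, A i i = 1) ->
  (forall i j, i != j -> A i j != 0 -> (h j < h i)%N) ->
  \det A = 1.
Proof.
elim: k A h => [|k IH] A h A_diag A_trig; first by rewrite det_mx00.
pose i := [arg min_(i < ord0) h i].
have i_row j : j != i -> A i j = 0.
  move=> ji; apply/eqP; apply: contraT => Aij.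
  have := A_trig i j; rewrite eq_sym => /(_ ji Aij).
  by rewrite /i; case: arg_minnP => // i0 _ /(_ j isT); rewrite ltnNge => ->.
rewrite (expand_det_row _ i) (bigD1 i) //= big1 ?addr0; last first.
  by move=> j ji; rewrite i_row // mul0r.
rewrite A_diag mul1r /cofactor addnn -signr_odd odd_double mul1r.
apply: (IH _ (h \o lift i)) => [a | a b].
- by rewrite !mxE A_diag.
- by rewrite !mxE => ab; apply: A_trig; rewrite (inj_eq lift_inj).
Qed.

End UnitDiagonalDeterminants.

Lemma mxrank_mxsub (R : fieldType) m n m' n' (f : 'I_m' -> 'I_m) (g : 'I_n' -> 'I_n)
    (A : 'M[R]_(m, n)) :
  (\rank (mxsub f g A) <= \rank A)%N.
Proof.
rewrite mxsubrc rowsubE (leq_trans (mxrankM_maxr _ _)) //.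
have -> : colsub g A = A *m colsub g 1%:M by rewrite mulmx_colsub mulmx1.
exact: mxrankM_maxl.
Qed.

Section MonotoneRates.
Variable R : realType.

Lemma derive1_gt0_mono (f : R -> R) :
  (forall a, 0 < a -> derivable f a 1 /\ 0 < 'D_1 f a) ->
  {in Num.pos &, {mono f : a b / a <= b}}.
Proof.
move=> df; apply: le_mono_in => a b a0 b0 ab.
move: a0 b0; rewrite !posrE => a0 b0.
have a_in : a \in `]0, b + 1[ by rewrite in_itv /= a0 (lt_trans ab) // ltrDl ltr01.
have b_in : b \in `]0, b + 1[ by rewrite in_itv /= b0 ltrDl ltr01.
apply: (gtr0_derive1_lt_oo _ _ _ a_in b_in ab) => z.
- by rewrite in_itv /= => /andP [z0 _]; exact: (df z z0).1.
- by rewrite in_itv /= derive1E => /andP [z0 _]; exact: (df z z0).2.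
rewrite inE /= in_itv /= => /andP [z0 _].
by apply/differentiable_continuous/derivable1_diffP; exact: (df z z0).1.
Qed.

Lemma mono_chem1_mono (r : R -> R) : mono_chem1 r -> {in Num.pos &, {mono r : a b / a <= b}}.
Proof. by case=> _ _; exact: derive1_gt0_mono. Qed.

Lemma mono_chem2_monol (r : R -> R -> R) b :
  mono_chem2 r -> 0 < b -> {in Num.pos &, {mono r^~ b : a a' / a <= a'}}.
Proof. by case=> _ _ dr _ b0; apply: derive1_gt0_mono => a a0; exact: dr. Qed.

Lemma mono_chem2_monor (r : R -> R -> R) a :
  mono_chem2 r -> 0 < a -> {in Num.pos &, {mono r a : b b' / b <= b'}}.
Proof. by case=> _ _ _ dr a0; apply: derive1_gt0_mono => b b0; exact: dr. Qed.

Lemma mono_chem2_lel (r : R -> R -> R) a b a' b' :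
  mono_chem2 r -> 0 < a -> 0 < b -> 0 < a' -> 0 < b' ->
  r a b <= r a' b' -> b' <= b -> a <= a'.
Proof.
move=> r_mono a0 b0 a'0 b'0 r_le b_le; rewrite -(mono_chem2_monol r_mono b0) ?posrE //.
by rewrite (le_trans r_le) // (mono_chem2_monor r_mono a'0) ?posrE.
Qed.

Lemma mono_chem2_ler (r : R -> R -> R) a b a' b' :
  mono_chem2 r -> 0 < a -> 0 < b -> 0 < a' -> 0 < b' ->
  r a b <= r a' b' -> a' <= a -> b <= b'.
Proof.
move=> r_mono a0 b0 a'0 b'0 r_le a_le; rewrite -(mono_chem2_monor r_mono a0) ?posrE //.
by rewrite (le_trans r_le) // (mono_chem2_monol r_mono b'0) ?posrE.
Qed.

Lemma rate_chain_le (ra : R -> R) (rb rc : R -> R -> R) t d n ni ne t' d' n' ni' ne' :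
  mono_chem1 ra -> mono_chem2 rb -> mono_chem2 rc ->
  0 < t -> 0 < d -> 0 < n -> 0 < ni -> 0 < ne ->
  0 < t' -> 0 < d' -> 0 < n' -> 0 < ni' -> 0 < ne' ->
  ra t <= ra t' -> rb n d <= rb n' d' -> rc ni ne <= rc ni' ne' ->
  d + t = d' + t' -> ni + n = ni' + n' ->
  [/\ t <= t', n <= n' & ne <= ne'].
Proof.
move=> ra_mono rb_mono rc_mono t0 d0 n0 ni0 ne0 t'0 d'0 n'0 ni'0 ne'0 ra_le rb_le rc_le
  dt_eq nin_eq.
have t_le : t <= t' by rewrite -(mono_chem1_mono ra_mono) ?posrE.
have n_le : n <= n' by apply: (mono_chem2_lel rb_mono _ _ _ _ rb_le) => //; lra.
have ne_le : ne <= ne' by apply: (mono_chem2_ler rc_mono _ _ _ _ rc_le) => //; lra.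
by [].
Qed.

End MonotoneRates.

Definition principal_minor (R : comNzRingType) n (G : 'M[R]_n) (A : {set 'I_n}) : R :=
  \det (\matrix_(i < #|A|, j < #|A|) G (enum_val i) (enum_val j)).

Section SingleOccurrenceNetworks.
Variables (M E : nat) (s st : 'M[nat]_(M, E)) (consumer producer : 'I_M -> 'I_E).
Hypothesis sE : forall m j, s m j = (j == consumer m).
Hypothesis stE : forall m j, st m j = (j == producer m).
Hypothesis consumer_neq_producer : forall m, consumer m != producer m.

Lemma reactantE m j : reactant s m j = (j == consumer m).
Proof. by rewrite /reactant sE lt0b. Qed.

Lemma stoichE (R : nzRingType) m j :
  stoich R s st m j = (j == producer m)%:R - (j == consumer m)%:R.
Proof. by rewrite mxE sE stE. Qed.

Lemma stoich_mulmx (R : nzRingType) n (v : 'M[R]_(E, n)) m i :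
  (stoich R s st *m v) m i = v (producer m) i - v (consumer m) i.
Proof.
rewrite mxE (bigD1 (consumer m)) //= (bigD1 (producer m)) 1?eq_sym //= big1.
  have pc : (producer m == consumer m) = false by rewrite eq_sym; exact/negbTE.
  by rewrite !stoichE !eqxx pc eq_sym pc subr0 sub0r addr0 mulN1r mul1r addrC.
by move=> j /andP [jc jp]; rewrite stoichE (negbTE jc) (negbTE jp) subr0 mul0r.
Qed.

Lemma CS_consumer k (kappa : 'I_k -> 'I_M) (J : 'I_k -> 'I_E) :
  is_CS s kappa J -> forall i, J i = consumer (kappa i).
Proof. by case=> _ _ _ J_react i; apply/eqP; rewrite -reactantE. Qed.

Lemma oppCS_matrixE (R : nzRingType) k (kappa : 'I_k -> 'I_M) (J : 'I_k -> 'I_E) :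
  (forall i, J i = consumer (kappa i)) ->
  forall i l, (- CS_matrix (stoich R s st) kappa J) i l =
              (J l == J i)%:R - (J l == producer (kappa i))%:R.
Proof. by move=> J_cons i l; rewrite !mxE sE stE -J_cons opprB. Qed.

Lemma det_CS_matrix (R : fieldType) k (kappa : 'I_k -> 'I_M) (J : 'I_k -> 'I_E) :
  injective J -> (forall i, J i = consumer (kappa i)) ->
  \det (CS_matrix (stoich R s st) kappa J) = 0 \/
  \det (CS_matrix (stoich R s st) kappa J) = (-1) ^+ k.
Proof.
move=> J_inj J_cons.
have minusE i l : (- CS_matrix (stoich R s st) kappa J) i l
    = (l == i)%:R - (J l == producer (kappa i))%:R.
  by rewrite (oppCS_matrixE _ J_cons) (inj_eq J_inj).
set C := CS_matrix (stoich R s st) kappa J in minusE *.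
have [D0 | D1] : \det (- C) = 0 \/ \det (- C) = 1.
  apply: det_unitdiag_sparse_rows => [i | i l il | i l l' il il'].
  - by rewrite minusE eqxx J_cons (negbTE (consumer_neq_producer _)) subr0.
  - by rewrite minusE eq_sym (negbTE il) sub0r; case: eqP; [right | left; rewrite oppr0].
  - rewrite !minusE ![_ == i]eq_sym (negbTE il) (negbTE il') !sub0r.
    case: (J l =P producer (kappa i)) => [lp | _]; last by rewrite oppr0 eqxx.
    case: (J l' =P producer (kappa i)) => [l'p | _]; last by rewrite oppr0 eqxx.
    by move=> _ _; apply: J_inj; rewrite lp l'p.
- by left; rewrite -[C]opprK -scaleN1r detZ D0 mulr0.
- by right; rewrite -[C]opprK -scaleN1r detZ D1 mulr1.
Qed.

Lemma no_unstable_positive_feedback (R : realFieldType) :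
  ~ has_unstable_positive_feedback R s st.
Proof.
move=> [[|k] [kappa [J [kappaJ_CS [sg_det _]]]]]; first by case: kappaJ_CS.
have [_ _ J_inj _] := kappaJ_CS.
move: sg_det; have [->|->] := det_CS_matrix R J_inj (CS_consumer kappaJ_CS).
  by rewrite sgr0 => /eqP; rewrite eq_sym signr_eq0.
by rewrite sgrX sgrN1 exprS mulN1r => /eqP; rewrite eqNr signr_eq0.
Qed.

Lemma not_autocatalytic (R : realFieldType) : ~ autocatalytic R s st.
Proof.
move=> [k [kappa [J [kappaJ_CS [upf _]]]]].
by apply: (@no_unstable_positive_feedback R); exists k, kappa, J.
Qed.

Lemma jacobianE (R : nzRingType) (rho : 'I_E -> 'I_M -> R) m m' :
  (stoich R s st *m reactivity s rho) m m' =
  stoich R s st m (consumer m') * rho (consumer m') m'.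
Proof.
rewrite mxE (bigD1 (consumer m')) //= big1 ?addr0 => [|j j_cons].
  by rewrite [reactivity _ _ _ _]mxE reactantE eqxx.
by rewrite [reactivity _ _ _ _]mxE reactantE (negbTE j_cons) mulr0.
Qed.

Lemma principal_minor_jacobian (R : comNzRingType) (rho : 'I_E -> 'I_M -> R) (A : {set 'I_M}) :
  principal_minor (stoich R s st *m reactivity s rho) A =
  \det (CS_matrix (stoich R s st) (enum_val : 'I_#|A| -> 'I_M) (consumer \o enum_val)) *
  \prod_(i < #|A|) rho (consumer (enum_val i)) (enum_val i).
Proof.
pose d := \row_(j < #|A|) rho (consumer (enum_val j)) (enum_val j).
have -> : \prod_(i < #|A|) rho (consumer (enum_val i)) (enum_val i) = \det (diag_mx d).
  by rewrite det_diag; apply: eq_bigr => i _; rewrite mxE.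
rewrite -det_mulmx mul_mx_diag; congr (\det _); apply/matrixP => i j.
by rewrite mxE jacobianE !mxE.
Qed.

Section PositiveReactivities.
Variables (R : realFieldType) (rho : 'I_E -> 'I_M -> R).
Hypothesis rho_gt0 : forall j m, reactant s m j -> 0 < rho j m.

Lemma sgr_principal_minor_jacobian (A : {set 'I_M}) :
  Num.sg (principal_minor (stoich R s st *m reactivity s rho) A) =
  Num.sg (\det (CS_matrix (stoich R s st) (enum_val : 'I_#|A| -> 'I_M)
                       (consumer \o enum_val))).
Proof.
have prod_gt0 : 0 < \prod_(i < #|A|) rho (consumer (enum_val i)) (enum_val i).
  by apply: prodr_gt0 => i _; apply: rho_gt0; rewrite reactantE.
by rewrite principal_minor_jacobian sgrM (gtr0_sg prod_gt0) mulr1.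
Qed.

Lemma principal_minor_jacobian_sign (A : {set 'I_M}) :
  0 <= (-1) ^+ #|A| * principal_minor (stoich R s st *m reactivity s rho) A.
Proof.
rewrite -sgr_ge0 sgrM sgr_principal_minor_jacobian sgrX sgrN1.
have [/injectiveP cons_inj | /injectivePn [i [l il /= cons_il]]] :=
  boolP (injectiveb (consumer \o @enum_val _ (mem A))).
  have [->|->] := det_CS_matrix R cons_inj (fun=> erefl); first by rewrite sgr0 mulr0.
  by rewrite sgrX sgrN1 -expr2 sqrr_sign.
rewrite -det_tr (determinant_alternate il) ?sgr0 ?mulr0 // => r.
by rewrite !mxE /= cons_il.
Qed.

End PositiveReactivities.

Lemma rank_stoich_lt (R : fieldType) : (0 < E)%N -> (\rank (stoich R s st) < E)%N.
Proof.
move=> E_gt0; pose ones : 'rV[R]_E := const_mx 1.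
have ones_neq0 : ones != 0.
  by apply/eqP => /rowP /(_ (Ordinal E_gt0)); rewrite !mxE; apply/eqP; exact: oner_neq0.
have ones_ker : (ones <= kermx (stoich R s st)^T)%MS.
  apply/sub_kermxP/trmx_inj; rewrite trmx_mul trmxK trmx0; apply/colP => m.
  by rewrite stoich_mulmx !mxE subrr.
by have := mxrankS ones_ker; rewrite mxrank_ker mxrank_tr rank_rV ones_neq0 subn_gt0.
Qed.

End SingleOccurrenceNetworks.

Lemma same_SCC_sym (R : nzRingType) M E (S : 'M[R]_(M, E)) (x y : 'cV[R]_M) :
  same_SCC S x y -> same_SCC S y x.
Proof. by case=> v yx; exists (- v); rewrite mulmxN -yx opprB. Qed.

Definition rxn11 : 'I_6 := @Ordinal 6 0 isT.
Definition rxn12 : 'I_6 := @Ordinal 6 1 isT.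
Definition rxn13 : 'I_6 := @Ordinal 6 2 isT.
Definition rxn21 : 'I_6 := @Ordinal 6 3 isT.
Definition rxn22 : 'I_6 := @Ordinal 6 4 isT.
Definition rxn23 : 'I_6 := @Ordinal 6 5 isT.

Definition consumer_BI (m : 'I_10) : 'I_6 :=
  match val m with
  | 0 | 1 => rxn11 | 2 | 8 => rxn12 | 4 => rxn13 | 5 | 6 => rxn21 | 3 | 7 => rxn22 | _ => rxn23
  end%N.

Definition producer_BI (m : 'I_10) : 'I_6 :=
  match val m with
  | 2 => rxn11 | 1 | 9 => rxn12 | 0 | 3 => rxn13 | 7 => rxn21 | 4 | 6 => rxn22 | _ => rxn23
  end%N.

Lemma s_BIE m j : s_BI m j = (j == consumer_BI m).
Proof.
rewrite mxE; case: m => m m_lt; case: j => j j_lt.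
by do 10?[case: m m_lt => [|m] m_lt //]; do 6?[case: j j_lt => [|j] j_lt //].
Qed.

Lemma st_BIE m j : st_BI m j = (j == producer_BI m).
Proof.
rewrite mxE; case: m => m m_lt; case: j => j j_lt.
by do 10?[case: m m_lt => [|m] m_lt //]; do 6?[case: j j_lt => [|j] j_lt //].
Qed.

Lemma consumer_BI_neq_producer m : consumer_BI m != producer_BI m.
Proof. by case: m => m m_lt; do 10?[case: m m_lt => [|m] m_lt //]. Qed.

Lemma BI_species_ind (P : 'I_10 -> Prop) :
  P NE1 -> P NI1 -> P N1 -> P D1 -> P T1 -> P NE2 -> P NI2 -> P N2 -> P D2 -> P T2 ->
  forall m, P m.
Proof.
move=> P0 P1 P2 P3 P4 P5 P6 P7 P8 P9.
by case=> -[|[|[|[|[|[|[|[|[|[|//]]]]]]]]]] m_lt; rewrite (bool_irrelevance m_lt isT).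
Qed.

Lemma S_BI_mulmx (R : nzRingType) n (v : 'M[R]_(6, n)) m i :
  (S_BI R *m v) m i = v (producer_BI m) i - v (consumer_BI m) i.
Proof. exact: (stoich_mulmx s_BIE st_BIE consumer_BI_neq_producer). Qed.

Lemma S_BI_kernel (R : nzRingType) (v : 'cV[R]_6) :
  S_BI R *m v = 0 -> v = const_mx (v rxn11 0).
Proof.
move=> Sv0; have flux m : v (producer_BI m) 0 = v (consumer_BI m) 0.
  by apply/eqP; rewrite -subr_eq0 -S_BI_mulmx Sv0 mxE.
apply/colP => -[[|[|[|[|[|[|//]]]]]] j_lt]; rewrite mxE (bool_irrelevance j_lt isT).
- by [].
- exact: (flux NI1).
- exact: (flux NE1).
- by rewrite -(flux NI2) -(flux D1) (flux NE1).
- by rewrite -(flux D1) (flux NE1).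
- by rewrite (flux NE2) -(flux NI2) -(flux D1) (flux NE1).
Qed.

Lemma BI_conservation (R : realDomainType) (x y : 'cV[R]_10) :
  same_SCC (S_BI R) x y ->
  [/\ x D1 0 + x T1 0 = y D1 0 + y T1 0, x D2 0 + x T2 0 = y D2 0 + y T2 0,
      x NI1 0 + x N1 0 = y NI1 0 + y N1 0, x NI2 0 + x N2 0 = y NI2 0 + y N2 0 &
      x NE1 0 + x N1 0 + x T1 0 + x NE2 0 + x N2 0 + x T2 0 =
      y NE1 0 + y N1 0 + y T1 0 + y NE2 0 + y N2 0 + y T2 0].
Proof.
case=> v yx; have dyx m : y m 0 - x m 0 = v (producer_BI m) 0 - v (consumer_BI m) 0.
  by rewrite -S_BI_mulmx -yx !mxE.
move: (dyx NE1) (dyx NI1) (dyx N1) (dyx D1) (dyx T1).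
move: (dyx NE2) (dyx NI2) (dyx N2) (dyx D2) (dyx T2) => /= *.
by split; lra.
Qed.

Definition CS_species_BI : {set 'I_10} := [set:: [:: NE1; N1; D1; NI2; T2]].

Lemma card_CS_species_BI : #|CS_species_BI| = 5%N.
Proof. by rewrite cardsE; apply/card_uniqP. Qed.

Lemma CS_species_BI_trig (m m' : 'I_10) :
  m \in CS_species_BI -> m' \in CS_species_BI -> m != m' ->
  (consumer_BI m' == consumer_BI m) || (consumer_BI m' == producer_BI m) -> (m' < m)%N.
Proof.
rewrite !inE; case: m => m m_lt; case: m' => m' m'_lt.
by do 10?[case: m m_lt => [|m] m_lt //]; do 10?[case: m' m'_lt => [|m'] m'_lt //].
Qed.

Lemma det_CS_species_BI (R : fieldType) :
  \det (CS_matrix (S_BI R) (enum_val : 'I_#|CS_species_BI| -> 'I_10) (consumer_BI \o enum_val))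
  = -1.
Proof.
set C := CS_matrix _ _ _.
rewrite -[C]opprK -scaleN1r detZ (@det_unitdiag_trig_by _ _ _ (val \o enum_val)).
- by rewrite mulr1 card_CS_species_BI -signr_odd expr1.
- move=> i; rewrite (oppCS_matrixE s_BIE st_BIE _ (fun=> erefl)) /= eqxx.
  by rewrite (negbTE (consumer_BI_neq_producer _)) subr0.
move=> i l il; rewrite (oppCS_matrixE s_BIE st_BIE _ (fun=> erefl)) /= => C_il.
apply: CS_species_BI_trig; rewrite ?enum_valP ?(inj_eq enum_val_inj) //.
by apply: contraLR C_il; rewrite negb_or negbK => /andP [/negbTE -> /negbTE ->]; rewrite subrr.
Qed.

Lemma rank_S_BI (R : fieldType) : \rank (S_BI R) = 5%N.
Proof.
apply/eqP; rewrite eqn_leq -ltnS (rank_stoich_lt s_BIE st_BIE consumer_BI_neq_producer) //=.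
have C_unit : CS_matrix (S_BI R) (enum_val : 'I_#|CS_species_BI| -> 'I_10)
    (consumer_BI \o enum_val) \in unitmx.
  by rewrite unitmxE det_CS_species_BI unitrN1.
rewrite -[X in (X <= _)%N]card_CS_species_BI -(mxrank_unit C_unit).
exact: mxrank_mxsub.
Qed.

Lemma a_Mn_BI_lt0 (R : realFieldType) (rho : 'I_6 -> 'I_10 -> R) :
  (forall j m, reactant s_BI m j -> 0 < rho j m) -> a_Mn s_BI st_BI rho < 0.
Proof.
move=> rho_gt0.
rewrite /a_Mn /= -/(S_BI R) /dim_ker_ST mxrank_ker rank_S_BI.
have -> : (10 - (10 - 5) = 5)%N by [].
have -> : principal_minor_sum (S_BI R *m reactivity s_BI rho) 5 =
    \sum_(A : {set 'I_10} | #|A| == 5%N)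
      principal_minor (S_BI R *m reactivity s_BI rho) A by [].
rewrite (bigD1 CS_species_BI) ?card_CS_species_BI //=.
have minor_lt0 : principal_minor (S_BI R *m reactivity s_BI rho) CS_species_BI < 0.
  by rewrite -sgr_lt0 (sgr_principal_minor_jacobian _ s_BIE) // det_CS_species_BI sgrN1 ltrN10.
have other_minors_le0 : \sum_(A : {set 'I_10} | (#|A| == 5%N) && (A != CS_species_BI))
    principal_minor (S_BI R *m reactivity s_BI rho) A <= 0.
  apply: sumr_le0 => A /andP [/eqP cardA _].
  have := principal_minor_jacobian_sign s_BIE st_BIE consumer_BI_neq_producer rho_gt0 A.
  by rewrite cardA -signr_odd expr1 mulN1r oppr_ge0.
lra.
Qed.

Section SteadyStatesBI.
Variables (R : realType) (r11 r12 : R -> R -> R) (r13 : R -> R).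
Variables (r21 r22 : R -> R -> R) (r23 : R -> R).
Hypotheses (r11_mono : mono_chem2 r11) (r12_mono : mono_chem2 r12) (r13_mono : mono_chem1 r13).
Hypotheses (r21_mono : mono_chem2 r21) (r22_mono : mono_chem2 r22) (r23_mono : mono_chem1 r23).
Let rates := BI_rates r11 r12 r13 r21 r22 r23.

Lemma BI_steady_states_le_eq (x y : 'cV[R]_10) :
  positive_vec x -> S_BI R *m rates x = 0 ->
  positive_vec y -> S_BI R *m rates y = 0 ->
  same_SCC (S_BI R) x y -> r11 (x NI1 0) (x NE1 0) <= r11 (y NI1 0) (y NE1 0) -> x = y.
Proof.
move=> x_pos x_ss y_pos y_ss xy r11_le.
have rate_le j : rates x j 0 <= rates y j 0.
  by rewrite (S_BI_kernel x_ss) (S_BI_kernel y_ss) !mxE.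
move: (rate_le rxn11) (rate_le rxn12) (rate_le rxn13) (rate_le rxn21) (rate_le rxn22)
  (rate_le rxn23); rewrite /rates !mxE /= => le11 le12 le13 le21 le22 le23.
have [dt1 dt2 nin1 nin2 total] := BI_conservation xy.
have [t1 n2 ne2] := rate_chain_le r13_mono r22_mono r21_mono
  (x_pos T1) (x_pos D1) (x_pos N2) (x_pos NI2) (x_pos NE2)
  (y_pos T1) (y_pos D1) (y_pos N2) (y_pos NI2) (y_pos NE2)
  le13 le22 le21 dt1 nin2.
have [t2 n1 ne1] := rate_chain_le r23_mono r12_mono r11_mono
  (x_pos T2) (x_pos D2) (x_pos N1) (x_pos NI1) (x_pos NE1)
  (y_pos T2) (y_pos D2) (y_pos N1) (y_pos NI1) (y_pos NE1)
  le23 le12 le11 dt2 nin1.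
by apply/colP; elim/BI_species_ind; lra.
Qed.

Lemma BI_positive_steady_state_unique (x y : 'cV[R]_10) :
  positive_vec x -> S_BI R *m rates x = 0 ->
  positive_vec y -> S_BI R *m rates y = 0 ->
  same_SCC (S_BI R) x y -> x = y.
Proof.
move=> x_pos x_ss y_pos y_ss xy.
have /orP [r11_le | r11_ge] := le_total (r11 (x NI1 0) (x NE1 0)) (r11 (y NI1 0) (y NE1 0)).
  exact: BI_steady_states_le_eq.
exact/esym/(BI_steady_states_le_eq y_pos y_ss x_pos x_ss (same_SCC_sym xy)).
Qed.

End SteadyStatesBI.

Theorem theorem3p1 (R : realType) :
  (forall (r11 r12 : R -> R -> R) (r13 : R -> R)
          (r21 r22 : R -> R -> R) (r23 : R -> R),
     mono_chem2 r11 -> mono_chem2 r12 -> mono_chem1 r13 ->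
     mono_chem2 r21 -> mono_chem2 r22 -> mono_chem1 r23 ->
     forall x y : 'cV[R]_10,
       positive_vec x -> S_BI R *m BI_rates r11 r12 r13 r21 r22 r23 x = 0 ->
       positive_vec y -> S_BI R *m BI_rates r11 r12 r13 r21 r22 r23 y = 0 ->
       same_SCC (S_BI R) x y -> x = y)
  /\ ~ autocatalytic R s_BI st_BI
  /\ ~ has_unstable_positive_feedback R s_BI st_BI
  /\ ~ capacity_for_differentiation R s_BI st_BI swap_species_BI swap_reactions_BI.
Proof.
split; first exact: BI_positive_steady_state_unique.
split; first exact: (not_autocatalytic s_BIE st_BIE consumer_BI_neq_producer (R := R)).
split.
  exact: (no_unstable_positive_feedback s_BIE st_BIE consumer_BI_neq_producer (R := R)).
by case=> rho [rho_gt0 [_ a_eq0]]; have := a_Mn_BI_lt0 rho_gt0; rewrite a_eq0 ltxx.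
Qed.
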